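(* Let $G$ be a graph and let $\mathcal{B}$ be a bramble in $G$ of maximum order. If $X \subseteq V(G)$ is such that $\mathcal{B}_X$ has order at most $k$, then $\operatorname{tw}(G) \le \operatorname{tw}(G-X) + k$.
   Context: All graphs are finite and simple. A bramble $\mathcal{B}$ in a graph $G$ is a family of connected subgraphs of $G$ such that every two of them share a vertex or are joined by an edge of $G$. A hitting set for $\mathcal{B}$ is a set of vertices intersecting every element of $\mathcal{B}$; the order of $\mathcal{B}$ is the minimum size of a hitting set. Any subset of a bramble is a bramble. For $X\subseteq V(G)$, $\mathcal{B}_X$ denotes the set of elements of $\mathcal{B}$ that intersect $X$. $\operatorname{tw}(G)$ denotes the treewidth of $G$. *)

(* A simple graph is a symmetric irreflexive relation e on a finType T. *)
From mathcomp Require Import all_boot all_order all_algebra.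
Set Implicit Arguments. Unset Strict Implicit. Unset Printing Implicit Defensive.
Import Order.TTheory GRing.Theory Num.Theory.

Section Defs.
Variable T : finType.
Variable e : rel T.

Definition induced (A : {set T}) : rel T :=
  [rel a b | e a b && (a \in A) && (b \in A)].

Definition connected_set (A : {set T}) : bool :=
  (A != set0) && [forall x in A, forall y in A, connect (induced A) x y].

Definition touch (A B : {set T}) : bool :=
  (A :&: B != set0) || [exists x in A, exists y in B, e x y].

Definition is_bramble (Br : {set {set T}}) : Prop :=
  (forall A, A \in Br -> connected_set A) /\
  (forall A B, A \in Br -> B \in Br -> touch A B).

Definition hitting (Br : {set {set T}}) (H : {set T}) : bool :=
  [forall A in Br, H :&: A != set0].

(* order = minimum size of a hitting set (setT is always one for a bramble) *)
Definition bramble_order (Br : {set {set T}}) : nat :=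
  \big[minn/#|T|]_(H : {set T} | hitting Br H) #|H|.

Definition bramble_restr (Br : {set {set T}}) (X : {set T}) : {set {set T}} :=
  [set A in Br | A :&: X != set0].

Definition max_order_bramble (Br : {set {set T}}) : Prop :=
  is_bramble Br /\
  (forall Br' : {set {set T}}, is_bramble Br' -> bramble_order Br' <= bramble_order Br).

End Defs.

Definition is_tree (I : finType) (t : rel I) : Prop :=
  [/\ 0 < #|I|, symmetric t, irreflexive t,
      (forall x y, connect t x y) &
      (forall x (p : seq I), uniq (x :: p) -> path t x p -> t (last x p) x -> size p < 2)].

Definition tree_decomp (T : finType) (e : rel T) (S : {set T})
    (I : finType) (t : rel I) (B : I -> {set T}) : Prop :=
  [/\ is_tree t,
      (forall i, B i \subset S),
      (forall v, v \in S -> exists i, v \in B i),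
      (forall u v, u \in S -> v \in S -> e u v -> exists i, (u \in B i) && (v \in B i)) &
      (forall v i j, v \in B i -> v \in B j ->
          connect [rel a b | t a b && (v \in B a) && (v \in B b)] i j)].

(* width = max bag size - 1, as an integer (so the empty graph has width -1) *)
Definition td_width (T I : finType) (B : I -> {set T}) : int :=
  ((\max_(i : I) #|B i|)%N)%:Z - 1.

Definition has_treewidth (T : finType) (e : rel T) (S : {set T}) (w : int) : Prop :=
  (exists (I : finType) (t : rel I) (B : I -> {set T}),
      tree_decomp e S t B /\ td_width B = w) /\
  (forall (I : finType) (t : rel I) (B : I -> {set T}),
      tree_decomp e S t B -> (w <= td_width B)%R).

From mathcomp Require Import all_boot all_order all_algebra zify.
Set Implicit Arguments. Unset Strict Implicit. Unset Printing Implicit Defensive.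

(* The elements of B avoiding X form a bramble of G - X; by the Helly property
   of subtrees one bag of any tree decomposition of G - X covers them, so
   ord B <= ord (B \ B_X) + ord B_X <= tw(G - X) + 1 + k.  Conversely, since no
   bramble of G has order above s := ord B, G has a tree decomposition with bags
   of size at most s, so tw G <= s - 1.  This hard half of tree-width duality is
   proved without Menger's theorem, by downward induction on |B'|: every bramble
   B' has a decomposition in which no bag of size > s covers B'.  For a minimum
   cover X' of B', glue such decompositions of G[X' + C] over the components C
   of G - X'.  If some element of B' misses C, the bags X' and C + N(C) do.
   Otherwise B' + C is a larger bramble; a decomposition admissible for it has a
   large bag covering B' and avoiding C, and replacing every bag by its part in C
   plus the vertices of X' occurring below it gives a decomposition of G[X' + C]
   whose bags did not grow, by minimality of X'. *)

Section InducedConnect.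
Variable I : finType.
Implicit Types (e : rel I) (A : {set I}) (a b c x y : I) (p : seq I).

Lemma connect_ind e (P : I -> Prop) a b :
  P a -> (forall u v, P u -> e u v -> P v) -> connect e a b -> P b.
Proof.
move=> Pa step /connectP[p pp ->]; elim: p a Pa pp => //= y p IH a Pa /andP[eay pp].
exact: IH (step _ _ Pa eay) pp.
Qed.

Lemma connect_mono e e' : subrel e e' -> subrel (connect e) (connect e').
Proof. by move=> ee'; apply: connect_sub => x y /ee'/connect1. Qed.

Definition connected_in e A := {in A &, forall x y, connect (induced e A) x y}.

Lemma induced_sym e A : symmetric e -> symmetric (induced e A).
Proof. by move=> se x y; rewrite /induced /= se andbAC. Qed.

Lemma induced_mono e A A' : A \subset A' -> subrel (induced e A) (induced e A').
Proof.
by move=> /subsetP AA' x y; rewrite /induced /= => /andP[/andP[-> /AA' ->] /AA' ->].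
Qed.

Lemma connect_induced_mem e A a b : connect (induced e A) a b -> a \in A -> b \in A.
Proof.
move=> h aA; apply: (connect_ind (P := fun z => z \in A) aA _ h).
by move=> u v _ /andP[/andP[_ _] ->].
Qed.

Lemma path_inducedP e A x p :
  x \in A -> reflect (path e x p /\ {subset p <= A}) (path (induced e A) x p).
Proof.
elim: p x => [|y p IH] x xA /=; first by constructor.
apply: (iffP andP) => [[/andP[/andP[exy _] yA] /(IH _ yA)[pp pA]]|[/andP[exy pp] pA]].
  by split; [rewrite exy | move=> z; rewrite inE => /predU1P[->|/pA]].
have yA : y \in A by apply: pA; rewrite mem_head.
split; first by rewrite /induced /= exy xA yA.
by apply/(IH _ yA); split=> // z zp; apply: pA; rewrite inE zp orbT.
Qed.

Lemma induced_sub e A : subrel (induced e A) e.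
Proof. by move=> x y /andP[/andP[]]. Qed.

Lemma induced_rel_mono e e' A : subrel e e' -> subrel (induced e A) (induced e' A).
Proof. by move=> ee' x y /andP[/andP[/ee' exy xA] yA]; rewrite /induced /= exy xA yA. Qed.

Lemma path_connect_last e x p z : path e x p -> z \in x :: p -> connect e z (last x p).
Proof.
elim: p x z => [|y p IH] x z /=; first by rewrite inE => _ /eqP->; apply: connect0.
move=> /andP[exy pp]; rewrite inE => /predU1P[-> | /(IH _ _ pp)//].
exact: connect_trans (connect1 exy) (IH y y pp (mem_head y p)).
Qed.

Lemma connect_avoiding e a b c :
  connect e a b -> ~~ connect e c b -> connect (induced e [set~ c]) a b.
Proof.
move=> /connectP[p pp ->] nc.
have cp : c \notin a :: p by apply: contra nc => /(path_connect_last pp).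
apply/connectP; exists p => //; apply/path_inducedP.
  by rewrite in_setC1; apply: contraNneq cp => <-; rewrite mem_head.
by split=> // z zp; rewrite in_setC1; apply: contraNneq cp => <-; rewrite inE zp orbT.
Qed.

Lemma connect_first_step e a b : a != b -> connect e a b ->
  exists2 j, e a j & connect (induced e [set~ a]) j b.
Proof.
move=> ab /connectP[p pp bE]; subst b; case/shortenP: pp ab => p' pp' up' _.
case: p' pp' up' => [|j q] /=; first by rewrite eqxx.
move=> /andP[eaj pq]; rewrite inE negb_or => /andP[/andP[aj anq] _] _.
exists j => //; apply/connectP; exists q => //.
apply/path_inducedP; first by rewrite in_setC1 eq_sym.
by split=> // z zq; rewrite in_setC1; apply: contraNneq anq => <-.
Qed.

Lemma connect_avoiding_end e a c : connect (induced e [set~ c]) a c -> a = c.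
Proof.
move=> h; apply/eqP; apply: contraT => ac.
by have := connect_induced_mem h; rewrite !in_setC1 eqxx ac => /(_ isT).
Qed.

End InducedConnect.

Section RootedTree.
Variable I : finType.
Implicit Types (S : {set I}) (a b c i j u w : I).

Definition parent_rel (par : I -> I) : rel I :=
  [rel i j | (i != j) && ((par i == j) || (par j == i))].

(* [par] is the parent map of the tree [t] rooted at [r], and the rank [rk]
   decreases towards the root.  Below, [fconnect par j i] says that [i] is an
   ancestor of [j]. *)
Definition rooted (t : rel I) (r : I) (par : I -> I) (rk : I -> nat) :=
  [/\ par r = r, forall i, i != r -> rk (par i) < rk i & t =2 parent_rel par].

Variables (t : rel I) (r : I) (par : I -> I) (rk : I -> nat).
Hypothesis t_rooted : rooted t r par rk.

Definition is_top S a := (a == r) || (par a \notin S).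

Lemma par_root : par r = r. Proof. by case: t_rooted. Qed.

Lemma rank_par i : i != r -> rk (par i) < rk i.
Proof. by case: t_rooted => _ h _; apply: h. Qed.

Lemma rootedE i j : t i j = parent_rel par i j.
Proof. by case: t_rooted => _ _ h; apply: h. Qed.

Lemma rooted_sym : symmetric t.
Proof. by move=> i j; rewrite !rootedE /parent_rel /= eq_sym orbC. Qed.

Lemma rooted_irr : irreflexive t.
Proof. by move=> i; rewrite rootedE /parent_rel /= eqxx. Qed.

Lemma par_neq i : i != r -> par i != i.
Proof. by move=> ir; apply/eqP => h; have := rank_par ir; rewrite h ltnn. Qed.

Lemma edge_par i : i != r -> t i (par i).
Proof. by move=> ir; rewrite rootedE /parent_rel /= eqxx /= andbT eq_sym par_neq. Qed.

Lemma edge_parP i j : t i j -> i != j /\ (par i = j \/ par j = i).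
Proof.
by rewrite rootedE /parent_rel /= => /andP[ne /orP[/eqP h|/eqP h]]; split => //; [left|right].
Qed.

Lemma ancestor_rank i a : fconnect par i a -> i != a -> rk a < rk i.
Proof.
move=> h ia; suff /orP[/eqP ai|//] : (a == i) || (rk a < rk i) by rewrite ai eqxx in ia.
apply: (connect_ind (P := fun a => (a == i) || (rk a < rk i)) _ _ h) => [|u _ Pu /eqP <-].
  by rewrite eqxx.
case: (eqVneq u r) => [ur|ur]; first by rewrite ur par_root -ur.
by case/orP: Pu => [/eqP <-|lt]; rewrite ?rank_par ?(ltn_trans (rank_par ur)) ?orbT.
Qed.

Lemma ancestor_anti a b : fconnect par a b -> fconnect par b a -> a = b.
Proof.
move=> hab hba; apply/eqP; apply: contraT => ne.
have := ancestor_rank hab ne; rewrite eq_sym in ne.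
by move/ltn_trans/(_ (ancestor_rank hba ne)); rewrite ltnn.
Qed.

Lemma ancestor_root i : fconnect par i r.
Proof.
elim: {i}(rk i).+1 {-2}i (ltnSn (rk i)) => // n IH i lt.
case: (eqVneq i r) => [->|ir]; first exact: connect0.
apply: connect_trans (fconnect1 par i) (IH _ _).
exact: leq_trans (rank_par ir) _.
Qed.

Lemma ancestor_of_root a : fconnect par r a -> a = r.
Proof. by move=> h; rewrite (ancestor_anti h (ancestor_root a)). Qed.

Lemma ancestor_total c u w : fconnect par c u -> fconnect par c w ->
  fconnect par u w || fconnect par w u.
Proof.
move=> /iter_findex <- /iter_findex <-.
set m := findex _ _ _; set n := findex _ _ _.
case: (leqP m n) => mn; [rewrite -(subnK mn) | rewrite -(subnK (ltnW mn)) orbC];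
  by rewrite iterD fconnect_iter.
Qed.

Lemma top_ancestor S a b : connected_in t S -> a \in S -> is_top S a -> b \in S ->
  fconnect par b a.
Proof.
move=> cS Sa ta Sb.
apply: (connect_ind (P := fun x => fconnect par x a) (connect0 _ a) _ (cS a b Sa Sb)).
move=> u v ua /andP[/andP[/edge_parP[uv [pu|pv]] _] Sv]; last first.
  by apply: connect_trans ua; rewrite -pv fconnect1.
case: (eqVneq u a) => [eua|nua]; last by move: ua; rewrite fconnect_eqVf (negPf nua) pu.
case/orP: ta => [/eqP ar|]; last by rewrite -eua pu Sv.
by move: uv; rewrite -pu eua ar par_root eqxx.
Qed.

Lemma top_par_mem S a b : connected_in t S -> a \in S -> is_top S a -> b \in S ->
  b != a -> par b \in S.
Proof.
move=> cS Sa ta Sb ba; case: (eqVneq b r) => [br|br]; first by rewrite br par_root -br.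
apply: contraT => nS; have tb : is_top S b by rewrite /is_top nS orbT.
by move: ba; rewrite (ancestor_anti (top_ancestor cS Sa ta Sb) (top_ancestor cS Sb tb Sa)) eqxx.
Qed.

Lemma ancestor_mem S a c u : connected_in t S -> a \in S -> is_top S a -> c \in S ->
  fconnect par c u -> fconnect par u a -> u \in S.
Proof.
move=> cS Sa ta Sc cu.
apply: (connect_ind (P := fun v => fconnect par v a -> v \in S) _ _ cu) => [_ //|v w Pv /eqP <- wa].
have Sv := Pv (connect_trans (fconnect1 par v) wa).
case: (eqVneq v a) => [va|va]; last exact: top_par_mem cS Sa ta Sv va.
by move: wa; rewrite va => wa; rewrite -(ancestor_anti (fconnect1 par a) wa).
Qed.

Lemma root_is_top S : is_top S r.
Proof. by rewrite /is_top eqxx. Qed.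

Lemma top_par_closed S a : connected_in t S -> a \in S -> is_top S a ->
  forall b, b \in S -> b != a -> (b != r) && (par b \in S).
Proof.
move=> cS Sa ta b Sb ba; rewrite (top_par_mem cS Sa ta Sb ba) andbT.
apply: contraNneq ba => br; rewrite br in Sb.
by rewrite br (ancestor_of_root (top_ancestor cS Sa ta Sb)).
Qed.

Lemma exists_top S a0 : a0 \in S -> exists2 a, a \in S & is_top S a.
Proof.
move=> Sa0; case: (arg_minnP rk Sa0) => a Sa amin; exists a => //.
case: (eqVneq a r) => [->|ar]; first by rewrite /is_top eqxx.
by rewrite /is_top (negPf ar) /=; apply/negP => /amin; rewrite leqNgt rank_par.
Qed.

Lemma connected_in_par_closed S a0 : a0 \in S ->
  (forall a, a \in S -> a != a0 -> (a != r) && (par a \in S)) -> connected_in t S.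
Proof.
move=> Sa0 h.
have to_a0 a : a \in S -> connect (induced t S) a a0.
  elim: {a}(rk a).+1 {-2}a (ltnSn (rk a)) => // n IH a lt Sa.
  case: (eqVneq a a0) => [->|ne]; first exact: connect0.
  case/andP: (h a Sa ne) => ar Sp.
  apply: connect_trans (connect1 _) (IH _ _ Sp); first by rewrite /induced /= edge_par // Sa Sp.
  exact: leq_trans (rank_par ar) _.
move=> a b Sa Sb; apply: connect_trans (to_a0 a Sa) _.
by rewrite (sym_connect_sym (induced_sym _ rooted_sym)) to_a0.
Qed.

Lemma par_of_rank_ge u v : t u v -> rk v <= rk u -> par u = v.
Proof.
move=> tuv le; case: (edge_parP tuv) => uv [//|pv].
case: (eqVneq v r) => [vr|vr]; first by move: uv; rewrite -pv vr par_root eqxx.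
by have := rank_par vr; rewrite pv ltnNge le.
Qed.

Lemma rooted_is_tree : is_tree t.
Proof.
split.
- by apply/card_gt0P; exists r.
- exact: rooted_sym.
- exact: rooted_irr.
- have to_root x : connect t x r.
    elim: {x}(rk x).+1 {-2}x (ltnSn (rk x)) => // n IH x lt.
    case: (eqVneq x r) => [->|xr]; first exact: connect0.
    apply: connect_trans (connect1 (edge_par xr)) (IH _ _).
    exact: leq_trans (rank_par xr) _.
  by move=> x y; apply: connect_trans (to_root x) _; rewrite (sym_connect_sym rooted_sym).
- (* On a cycle, both neighbours of a node of maximal rank are its parent. *)
  move=> x p up pp lt; rewrite ltnNge; apply/negP => sz.
  have cyc : cycle t (x :: p) by rewrite /cycle rcons_path pp lt.
  have xc : x \in x :: p by apply: mem_head.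
  case: (arg_maxnP rk xc) => u uc umax.
  have := rot_index uc; set c' := rot _ _ => ec'.
  have cyc' : cycle t c' by rewrite /c' rot_cycle.
  have uc' : uniq c' by rewrite /c' rot_uniq.
  have szc : size c' = (size p).+1 by rewrite /c' size_rot.
  have memc : forall z, z \in c' -> z \in x :: p by move=> z; rewrite /c' mem_rot.
  move: cyc' uc' szc memc; rewrite ec'; set q := _ ++ _.
  case: q => [|a [|y q1]] /=; try by move=> _ _ [] h; rewrite -h in sz.
  rewrite rcons_path /= => /and4P[tua _ _ tbu] /and4P[_ aq _ _] _ memc.
  have p1 : par u = a.
    by apply: par_of_rank_ge tua (umax _ (memc _ _)); rewrite !inE eqxx orbT.
  have p2 : par u = last y q1.
    apply: par_of_rank_ge; first by rewrite rooted_sym.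
    by apply: umax; apply: memc; rewrite in_cons in_cons mem_last !orbT.
  by move: aq; rewrite -p1 p2 mem_last.
Qed.

End RootedTree.

Section Rooting.
Variables (I : finType) (t : rel I) (r : I).
Hypothesis t_tree : is_tree t.

Let t_sym : symmetric t. Proof. by case: t_tree. Qed.
Let t_irr : irreflexive t. Proof. by case: t_tree. Qed.
Let t_conn x y : connect t x y. Proof. by case: t_tree. Qed.

Local Notation avoid i := (induced t [set~ i]).

Let avoid_mono i j : subrel (induced (avoid i) [set~ j]) (avoid j).
Proof. exact/induced_rel_mono/induced_sub. Qed.

Lemma tree_neighbours_separated i j1 j2 :
  j1 != j2 -> t i j1 -> t i j2 -> ~~ connect (avoid i) j1 j2.
Proof.
move=> ne tij1 tij2; apply/negP => /connectP[q0 pp e2]; subst j2.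
case/shortenP: pp ne tij2 => q pq uq _ ne tij2.
have ji : j1 \in [set~ i] by rewrite in_setC1; apply: contraTneq tij1 => ->; rewrite t_irr.
have [{}pq qi] := path_inducedP _ _ ji pq.
have iq : i \notin j1 :: q.
  by rewrite inE negb_or eq_sym -in_setC1 ji; apply/negP => /qi; rewrite in_setC1 eqxx.
have : size (j1 :: q) < 2.
  case: t_tree => _ _ _ _ acyc.
  by apply: (acyc i); rewrite /= ?cons_uniq ?iq ?tij1 // t_sym.
by case: q {pq uq qi iq} ne tij2 => [|z q] /=; rewrite ?eqxx.
Qed.

Definition tree_parent i :=
  if i == r then r else odflt i [pick j | t i j && connect (avoid i) j r].

Lemma tree_parentP i : i != r -> t i (tree_parent i) && connect (avoid i) (tree_parent i) r.
Proof.
move=> ir; rewrite /tree_parent (negPf ir); case: pickP => [j -> //|none].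
case: (connect_first_step ir (t_conn i r)) => j tij cj.
by have := none j; rewrite tij cj.
Qed.

Lemma tree_parent_unique i j : i != r -> t i j -> connect (avoid i) j r -> j = tree_parent i.
Proof.
move=> ir tij cj; apply/eqP; apply: contraT => ne.
case/andP: (tree_parentP ir) => tip cp.
case/negP: (tree_neighbours_separated ne tij tip).
by apply: connect_trans cj _; rewrite (sym_connect_sym (induced_sym _ t_sym)).
Qed.

Lemma tree_edge_parent i j : t i j -> tree_parent i = j \/ tree_parent j = i.
Proof.
move=> tij; have ij : i != j by apply: contraTneq tij => ->; rewrite t_irr.
case: (eqVneq i r) => [ir|ir].
  right; subst i; apply/esym/tree_parent_unique; [by rewrite eq_sym | by rewrite t_sym |].
  exact: connect0.
case: (eqVneq j r) => [jr|jr].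
  by left; subst j; apply/esym/tree_parent_unique => //; apply: connect0.
case: (eqVneq (tree_parent i) j) => [->|pj]; [by left|right].
have nj : ~~ connect (avoid i) j r.
  by apply: contra pj => h; rewrite -(tree_parent_unique ir tij h).
case/andP: (tree_parentP ir) => tip cp.
apply/esym/tree_parent_unique => //; first by rewrite t_sym.
apply: connect_trans (connect_mono (@avoid_mono i j) (connect_avoiding cp nj)).
by apply: connect1; rewrite /induced /= tip !in_setC1 ij pj.
Qed.

Definition tree_rank i := if i == r then 0 else #|[set k | connect (avoid i) r k]|.

Lemma tree_rank_parent i : i != r -> tree_rank (tree_parent i) < tree_rank i.
Proof.
move=> ir; case/andP: (tree_parentP ir) => tip cp.
case: (eqVneq (tree_parent i) r) => [pr|pr].
  by rewrite /tree_rank pr eqxx (negPf ir); apply/card_gt0P; exists r; rewrite inE connect0.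
rewrite /tree_rank (negPf ir) (negPf pr).
apply: proper_card; apply/properP; split.
  apply/subsetP => k; rewrite !inE => hk.
  case: (boolP (connect (avoid (tree_parent i)) i k)) => hik; last first.
    exact: (connect_mono (@avoid_mono (tree_parent i) i) (connect_avoiding hk hik)).
  have cir : connect (avoid (tree_parent i)) i r.
    by apply: connect_trans hik _; rewrite (sym_connect_sym (induced_sym _ t_sym)).
  case: (connect_first_step ir cir) => j /andP[/andP[tij _] jp] cj.
  have jE := tree_parent_unique ir tij (connect_mono (@avoid_mono (tree_parent i) i) cj).
  by move: jp; rewrite jE in_setC1 eqxx.
exists (tree_parent i); rewrite !inE; first by rewrite (sym_connect_sym (induced_sym _ t_sym)).
by apply: contra pr => /connect_avoiding_end ->.
Qed.

Lemma tree_rooted : rooted t r tree_parent tree_rank.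
Proof.
split; [by rewrite /tree_parent eqxx | exact: tree_rank_parent | move=> i j].
rewrite /parent_rel /=; apply/idP/idP => [tij|/andP[ij /orP[]] /eqP pij].
- have ij : i != j by apply: contraTneq tij => ->; rewrite t_irr.
  by rewrite ij /=; case: (tree_edge_parent tij) => ->; rewrite eqxx ?orbT.
- have ir : i != r by apply: contraNneq ij => ir; rewrite -pij ir /tree_parent eqxx.
  by case/andP: (tree_parentP ir); rewrite pij.
- have jr : j != r by apply: contraNneq ij => jr; rewrite -pij jr /tree_parent eqxx.
  by case/andP: (tree_parentP jr); rewrite pij t_sym.
Qed.

End Rooting.

Lemma tree_rooted_at (I : finType) (t : rel I) (r : I) : is_tree t ->
  exists par rk, rooted t r par rk.
Proof. by move=> t_tree; exists (tree_parent t r), (tree_rank t r); apply: tree_rooted. Qed.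

Lemma bag_connectE (T I : finType) (t : rel I) (B : I -> {set T}) v :
  connect [rel a b | t a b && (v \in B a) && (v \in B b)] =2
  connect (induced t [set i | v \in B i]).
Proof. by apply: eq_connect => a b; rewrite /induced /= !inE. Qed.

Section DecompositionFacts.
Variables (T : finType) (e : rel T).
Variables (S : {set T}) (I : finType) (t : rel I) (B : I -> {set T}).
Hypothesis decB : tree_decomp e S t B.

Lemma connected_setW (K : {set T}) : connected_set e K -> connected_in e K.
Proof.
by case/andP=> _ /forall_inP h x y xK yK; move/forall_inP: (h x xK); apply.
Qed.

Lemma connect_bags v i j : v \in B i -> v \in B j ->
  connect (induced t [set k | v \in B k]) i j.
Proof. by rewrite -bag_connectE; have [_ _ _ _] := decB; apply. Qed.

Lemma meeting_nodes_connected (K : {set T}) : K \subset S -> connected_in e K ->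
  connected_in t [set i | B i :&: K != set0].
Proof.
have [_ _ _ edgeS _] := decB; move=> KS cK a b.
rewrite !inE => /set0Pn[x /setIP[xa xK]] /set0Pn[y /setIP[yb yK]].
set N := [set i | _].
have sub z : z \in K -> subrel (induced t [set k | z \in B k]) (induced t N).
  move=> zK; apply/induced_mono/subsetP => i; rewrite !inE => zi.
  by apply/set0Pn; exists z; rewrite inE zi.
suff: forall j, y \in B j -> connect (induced t N) a j by apply.
apply: (connect_ind (P := fun z => forall j, z \in B j -> connect (induced t N) a j) _ _
  (cK x y xK yK)); first by move=> j xj; exact: (connect_mono (sub x xK) (connect_bags xa xj)).
move=> u v Pu /andP[/andP[euv uK] vK] j vj.
have [m /andP[um vm]] := edgeS u v (subsetP KS _ uK) (subsetP KS _ vK) euv.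
exact: connect_trans (Pu m um) (connect_mono (sub v vK) (connect_bags vm vj)).
Qed.

Lemma touch_common_bag (A A' : {set T}) : A \subset S -> A' \subset S -> touch e A A' ->
  exists i, (B i :&: A != set0) && (B i :&: A' != set0).
Proof.
have [_ _ covS edgeS _] := decB; move=> AS A'S.
case/orP => [/set0Pn[v /setIP[vA vA']] | /exists_inP[x xA /exists_inP[y yA' exy]]].
  have [i vi] := covS v (subsetP AS _ vA).
  by exists i; apply/andP; split; apply/set0Pn; exists v; rewrite inE vi.
have [i /andP[xi yi]] := edgeS x y (subsetP AS _ xA) (subsetP A'S _ yA') exy.
by exists i; apply/andP; split; apply/set0Pn; [exists x | exists y]; rewrite inE ?xi ?yi.
Qed.

Lemma meeting_ancestor r par rk (K : {set T}) x i j :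
  rooted t r par rk -> K \subset S -> connected_in e K -> B r :&: K != set0 ->
  x \in K -> x \in B j -> fconnect par j i -> B i :&: K != set0.
Proof.
move=> t_rooted KS cK rK xK xj ji; pose N := [set n | B n :&: K != set0].
have jN : j \in N by rewrite inE; apply/set0Pn; exists x; rewrite inE xj.
have rN : r \in N by rewrite inE.
have := ancestor_mem t_rooted (meeting_nodes_connected KS cK) rN (root_is_top _ _ _) jN ji
  (ancestor_root t_rooted i).
by rewrite inE.
Qed.

(* Helly property of subtrees: the deepest of the topmost nodes of the sets in
   [Br] lies in all of them. *)
Lemma decomp_bag_hitting (Br : {set {set T}}) :
  (forall A, A \in Br -> [/\ A \subset S, A != set0 & connected_in e A]) ->
  (forall A A', A \in Br -> A' \in Br -> touch e A A') ->
  exists i, hitting Br (B i).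
Proof.
move=> hA hT; have [t_tree _ covS _ _] := decB.
have [r _] : exists r : I, true by case: t_tree => /card_gt0P[r _]; exists r.
have [par [rk t_rooted]] := tree_rooted_at r t_tree.
case: (set_0Vmem Br) => [->| [A0 A0in]].
  by exists r; apply/forall_inP => A; rewrite in_set0.
pose nodes A := [set i | B i :&: A != set0].
have nodes_conn A : A \in Br -> connected_in t (nodes A).
  by case/hA => AS _ cA; apply: meeting_nodes_connected.
have nodes_top A : A \in Br -> exists2 w, w \in nodes A & is_top r par (nodes A) w.
  case/hA => AS /set0Pn[x xA] _; have [i xi] := covS x (subsetP AS _ xA).
  by apply: (exists_top t_rooted (a0 := i)); rewrite inE; apply/set0Pn; exists x; rewrite inE xi.
pose top u := [exists A in Br, (u \in nodes A) && is_top r par (nodes A) u].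
have [u0 Su0 tu0] := nodes_top _ A0in.
have : top u0 by apply/exists_inP; exists A0; rewrite ?Su0.
case/(arg_maxnP rk) => us /exists_inP[As Asin /andP[Sus tus]] usmax.
exists us; apply/forall_inP => A Ain; suff: us \in nodes A by rewrite inE.
have [w Sw tw] := nodes_top _ Ain.
have wle : rk w <= rk us by apply: usmax; apply/exists_inP; exists A; rewrite ?Sw.
have [[AS _ _] [AsS _ _]] := (hA _ Ain, hA _ Asin).
have [c /andP[cA cAs]] : exists c, (c \in nodes A) && (c \in nodes As).
  by have [c ?] := touch_common_bag AS AsS (hT _ _ Ain Asin); exists c; rewrite !inE.
have c_us := top_ancestor t_rooted (nodes_conn _ Asin) Sus tus cAs.
have c_w := top_ancestor t_rooted (nodes_conn _ Ain) Sw tw cA.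
case/orP: (ancestor_total c_us c_w) => [us_w|w_us].
  exact: (ancestor_mem t_rooted (nodes_conn _ Ain) Sw tw cA c_us us_w).
case: (eqVneq w us) => [<- //|ne].
by have := ancestor_rank t_rooted w_us ne; rewrite ltnNge wle.
Qed.

End DecompositionFacts.

Section Constructions.
Variables (T : finType) (e : rel T).
Hypothesis e_sym : symmetric e.

Lemma tree_decomp_single (X : {set T}) : exists t : rel unit, tree_decomp e X t (fun _ => X).
Proof.
have t_rooted : rooted (parent_rel (fun _ => tt)) tt (fun _ => tt) (fun _ => 0).
  by split => // -[] /=; rewrite eqxx.
exists (parent_rel (fun _ => tt)); split.
- exact: rooted_is_tree t_rooted.
- by move=> _; apply: subxx.
- by move=> v vX; exists tt.
- by move=> u v uX vX _; exists tt; rewrite uX vX.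
- by move=> v [] [] _ _; apply: connect0.
Qed.

Section Glue.
Variables (S1 S2 : {set T}) (I1 I2 : finType) (t1 : rel I1) (t2 : rel I2).
Variables (B1 : I1 -> {set T}) (B2 : I2 -> {set T}) (x1 : I1) (x2 : I2).
Hypothesis dec1 : tree_decomp e S1 t1 B1.
Hypothesis dec2 : tree_decomp e S2 t2 B2.
Hypothesis sep1 : S1 :&: S2 \subset B1 x1.
Hypothesis sep2 : S1 :&: S2 \subset B2 x2.
Hypothesis no_cross_edge :
  forall u v, u \in S1 -> v \in S2 -> e u v -> (u \in S2) || (v \in S1).

Definition glue_bag (n : I1 + I2) := match n with inl i => B1 i | inr j => B2 j end.

Definition glue_par (par1 : I1 -> I1) (par2 : I2 -> I2) (n : I1 + I2) : I1 + I2 :=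
  match n with
  | inl i => inl (par1 i)
  | inr j => if j == x2 then inl x1 else inr (par2 j)
  end.

Section GlueRooted.
Variables (par1 : I1 -> I1) (rk1 : I1 -> nat) (par2 : I2 -> I2) (rk2 : I2 -> nat).
Hypothesis rooted1 : rooted t1 x1 par1 rk1.
Hypothesis rooted2 : rooted t2 x2 par2 rk2.

Local Notation par := (glue_par par1 par2).

Definition glue_rank (n : I1 + I2) :=
  match n with inl i => rk1 i | inr j => rk2 j + rk1 x1 + 1 end.

Lemma glue_rooted : rooted (parent_rel par) (inl x1) par glue_rank.
Proof.
split => //; first by rewrite /= (par_root rooted1).
case=> [i|j] /= ne; first by apply: (rank_par rooted1); apply: contra ne => /eqP->.
case: (eqVneq j x2) => [_|jx]; first by rewrite addn1 ltnS leq_addl.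
by rewrite !ltn_add2r (rank_par rooted2).
Qed.

Lemma glue_bags_connected v : connected_in (parent_rel par) [set n | v \in glue_bag n].
Proof.
have [_ sub1 _ _ _] := dec1; have [_ sub2 _ _ _] := dec2.
have conn1 : connected_in t1 [set i | v \in B1 i].
  by move=> a b; rewrite !inE; exact: (connect_bags dec1).
have conn2 : connected_in t2 [set j | v \in B2 j].
  by move=> a b; rewrite !inE; exact: (connect_bags dec2).
case: (boolP [exists i, v \in B1 i]) => [/existsP[i0 vi0]|/existsPn notin1].
  have /(exists_top rooted1)[w Sw tw] : i0 \in [set i | v \in B1 i] by rewrite inE.
  apply: (connected_in_par_closed glue_rooted (a0 := inl w)); first by rewrite !inE in Sw *.
  case=> [i|j]; rewrite !inE => vn ne.
    have iS : i \in [set i | v \in B1 i] by rewrite inE.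
    have iw : i != w by apply: contra ne => /eqP->.
    by have /andP[/= -> ] := top_par_closed rooted1 conn1 Sw tw iS iw; rewrite inE.
  have vS : v \in S1 :&: S2 by rewrite inE (subsetP (sub1 i0)) // (subsetP (sub2 j)).
  rewrite /=; case: (eqVneq j x2) => [_|jx] /=; first exact: (subsetP sep1).
  have x2S : x2 \in [set j | v \in B2 j] by rewrite inE (subsetP sep2).
  have jS : j \in [set j | v \in B2 j] by rewrite inE.
  by have := top_par_mem rooted2 conn2 x2S (root_is_top _ _ _) jS jx; rewrite inE.
move=> n1 n2 vn1 vn2; have [j0 vj0] : exists j0, v \in B2 j0.
  by move: vn1; rewrite inE; case: n1 => [i|j] /=; [rewrite (negPf (notin1 i)) | exists j].
move: n1 n2 vn1 vn2.
have /(exists_top rooted2)[w Sw tw] : j0 \in [set j | v \in B2 j] by rewrite inE.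
apply: (connected_in_par_closed glue_rooted (a0 := inr w)); first by rewrite !inE in Sw *.
case=> [i|j]; rewrite !inE => vn ne; first by rewrite /= (negPf (notin1 i)) in vn.
have jS : j \in [set j | v \in B2 j] by rewrite inE.
have jw : j != w by apply: contra ne => /eqP->.
by have /andP[/negPf /= -> ] := top_par_closed rooted2 conn2 Sw tw jS jw; rewrite inE.
Qed.

End GlueRooted.

Lemma tree_decomp_glue : exists t, tree_decomp e (S1 :|: S2) t glue_bag.
Proof.
have [tree1 sub1 cov1 edge1 _] := dec1; have [tree2 sub2 cov2 edge2 _] := dec2.
have [par1 [rk1 rooted1]] := tree_rooted_at x1 tree1.
have [par2 [rk2 rooted2]] := tree_rooted_at x2 tree2.
exists (parent_rel (glue_par par1 par2)); split.
- exact: rooted_is_tree (glue_rooted rooted1 rooted2).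
- case=> [i|j] /=; first exact: subset_trans (sub1 i) (subsetUl _ _).
  exact: subset_trans (sub2 j) (subsetUr _ _).
- by move=> v /setUP[/cov1[i vi]|/cov2[j vj]]; [exists (inl i)|exists (inr j)].
- have edge12 u v : u \in S1 -> v \in S2 -> e u v ->
      exists n, (u \in glue_bag n) && (v \in glue_bag n).
    move=> uS vS euv; case/orP: (no_cross_edge uS vS euv) => [uS2|vS1].
      by have [j ?] := edge2 _ _ uS2 vS euv; exists (inr j).
    by have [i ?] := edge1 _ _ uS vS1 euv; exists (inl i).
  move=> u v /setUP[uS|uS] /setUP[vS|vS] euv.
  + by have [i ?] := edge1 _ _ uS vS euv; exists (inl i).
  + exact: edge12.
  + by rewrite e_sym in euv; have [n] := edge12 _ _ vS uS euv; exists n; rewrite andbC.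
  + by have [j ?] := edge2 _ _ uS vS euv; exists (inr j).
- move=> v n1 n2 vn1 vn2; rewrite bag_connectE.
  by apply: (glue_bags_connected rooted1 rooted2); rewrite inE.
Qed.

End Glue.
End Constructions.

Section Components.
Variables (T : finType) (e : rel T).
Hypothesis e_sym : symmetric e.
Implicit Types (A : {set T}) (a u v : T).

Definition component A a := [set v | connect (induced e A) a v].

Lemma component_self A a : a \in component A a.
Proof. by rewrite inE connect0. Qed.

Lemma component_sub A a : a \in A -> component A a \subset A.
Proof. by move=> aA; apply/subsetP => v; rewrite inE => /connect_induced_mem; apply. Qed.

Lemma component_closed A a u v :
  a \in A -> u \in component A a -> v \in A -> e u v -> v \in component A a.
Proof.
move=> aA ua vA euv; have uA := subsetP (component_sub aA) _ ua.
by move: ua; rewrite !inE => ua; apply: connect_trans ua (connect1 _); rewrite /induced /= euv uA.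
Qed.

Lemma component_eq A a v : v \in component A a -> component A v = component A a.
Proof.
rewrite inE => av; apply/setP => w; rewrite !inE; apply/idP/idP; first exact: connect_trans.
by apply: connect_trans; rewrite (sym_connect_sym (induced_sym _ e_sym)).
Qed.

Lemma component_connected A a : connected_in e (component A a).
Proof.
set K := component A a.
have aK z : z \in K -> connect (induced e K) a z.
  rewrite inE => az; suff [] : connect (induced e A) a z /\ connect (induced e K) a z by [].
  apply: (connect_ind (P := fun z => connect (induced e A) a z /\ connect (induced e K) a z)
    _ _ az); first by split; apply: connect0.
  move=> u v [au aKu] euv; have av := connect_trans au (connect1 euv).
  split=> //; apply: connect_trans aKu (connect1 _).
  by case/andP: euv => /andP[euv _] _; rewrite /induced /= euv !inE au av.
move=> x y xK yK; apply: connect_trans (aK y yK).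
by rewrite (sym_connect_sym (induced_sym _ e_sym)) aK.
Qed.

Lemma exists_boundary_edge A (P : pred T) x y : connect (induced e A) x y -> P x -> ~~ P y ->
  exists u v, [/\ e u v, u \in A, v \in A, P u & ~~ P v].
Proof.
move=> xy Px; apply: (connect_ind (P := fun z => ~~ P z -> exists u v, _) _ _ xy).
  by rewrite Px.
move=> u v IHu /andP[/andP[euv uA] vA] nPv.
by case: (boolP (P u)) => [Pu|/IHu//]; exists u, v.
Qed.

End Components.

Section BrambleOrder.
Variable T : finType.
Implicit Types (Br : {set {set T}}) (A H : {set T}).

Lemma hitting_setU1 Br A H : hitting (A |: Br) H = (H :&: A != set0) && hitting Br H.
Proof.
apply/forall_inP/andP => [h|[hA /forall_inP h] B].
  by split; [apply: h; rewrite setU11 | apply/forall_inP => B BBr; apply: h; rewrite setU1r].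
by case/setU1P => [->|]; last exact: h.
Qed.

Lemma hitting_setU Br1 Br2 H1 H2 :
  hitting Br1 H1 -> hitting Br2 H2 -> hitting (Br1 :|: Br2) (H1 :|: H2).
Proof.
move=> /forall_inP h1 /forall_inP h2; apply/forall_inP => A.
by case/setUP => [/h1|/h2] /set0Pn[v /setIP[vH vA]]; apply/set0Pn; exists v; rewrite !inE vH vA ?orbT.
Qed.

Lemma bramble_order_le Br H : hitting Br H -> bramble_order Br <= #|H|.
Proof.
move=> hH; have : H \in index_enum {set T} by rewrite mem_index_enum.
rewrite /bramble_order; elim: (index_enum _) => [//|H' r IH]; rewrite inE big_cons.
case/predU1P=> [<-|Hr]; first by rewrite hH geq_minl.
by case: (hitting Br _) => /=; rewrite ?geq_min IH ?orbT.
Qed.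

Lemma min_hitting_set Br : hitting Br setT -> exists2 H, hitting Br H & #|H| = bramble_order Br.
Proof.
case/(arg_minnP (fun H => #|H|)) => H hH Hmin; exists H => //.
apply/eqP; rewrite eqn_leq bramble_order_le // andbT /bramble_order.
by apply: (big_ind (fun n => #|H| <= n)) => [|m n|H' /Hmin]; rewrite ?max_card ?leq_min => // -> ->.
Qed.

Lemma bramble_orderU Br1 Br2 : hitting Br1 setT -> hitting Br2 setT ->
  bramble_order (Br1 :|: Br2) <= bramble_order Br1 + bramble_order Br2.
Proof.
move=> /min_hitting_set[H1 h1 <-] /min_hitting_set[H2 h2 <-].
by apply: leq_trans (bramble_order_le (hitting_setU h1 h2)) _; rewrite cardsU leq_subr.
Qed.

End BrambleOrder.

Section Brambles.
Variables (T : finType) (e : rel T).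
Hypothesis e_sym : symmetric e.
Implicit Types (Br : {set {set T}}) (A C : {set T}).

Lemma touch_sym A C : touch e A C = touch e C A.
Proof.
rewrite /touch setIC; congr (_ || _).
by apply/exists_inP/exists_inP => -[x xA /exists_inP[y yB exy]];
  exists y => //; apply/exists_inP; exists x; rewrite // e_sym.
Qed.

Lemma bramble_sub Br Br' : Br' \subset Br -> is_bramble e Br -> is_bramble e Br'.
Proof.
by move=> /subsetP sub [conn touch]; split=> [A /sub /conn|A A' /sub AB /sub]; last exact: touch.
Qed.

Lemma bramble_hitting_setT Br : is_bramble e Br -> hitting Br setT.
Proof. by case=> conn _; apply/forall_inP => A /conn /andP[]; rewrite setTI. Qed.

Lemma bramble_setU1 Br C : is_bramble e Br -> connected_set e C ->
  (forall A, A \in Br -> touch e A C) -> is_bramble e (C |: Br).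
Proof.
move=> [conn touchBr] connC touchC; split=> [A /setU1P[->|/conn] //|A A'].
case/setU1P => [->|ABr] /setU1P[->|A'Br]; last exact: touchBr.
- case/andP: connC => /set0Pn[c cC] _.
  by apply/orP; left; rewrite setIid; apply/set0Pn; exists c.
- by rewrite touch_sym touchC.
- exact: touchC.
Qed.

End Brambles.

Section Admissible.
Variables (T : finType) (e : rel T).
Hypothesis e_sym : symmetric e.
Variable s : nat.
Implicit Types (Br : {set {set T}}) (S X Y : {set T}).

Definition admissible (I : finType) Br (V : I -> {set T}) :=
  [forall i, (s < #|V i|) ==> ~~ hitting Br (V i)].

Definition admissible_decomp Br S X := exists (I : finType) (t : rel I) (V : I -> {set T}),
  [/\ tree_decomp e S t V, exists i, X \subset V i & admissible Br V].

Lemma admissible_decomp_single Br X : #|X| <= s -> admissible_decomp Br X X.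
Proof.
move=> Xs; have [t dec] := tree_decomp_single e X.
exists unit, t, (fun _ => X); split=> //.
by apply/forallP => _; rewrite ltnNge Xs.
Qed.

Lemma admissible_decomp_glue Br S1 S2 X :
  admissible_decomp Br S1 X -> admissible_decomp Br S2 X -> S1 :&: S2 \subset X ->
  (forall u v, u \in S1 -> v \in S2 -> e u v -> (u \in S2) || (v \in S1)) ->
  admissible_decomp Br (S1 :|: S2) X.
Proof.
move=> [I1 [t1 [V1 [dec1 [x1 X1] adm1]]]] [I2 [t2 [V2 [dec2 [x2 X2] adm2]]]] S12 cross.
have [t dec] := tree_decomp_glue e_sym dec1 dec2 (subset_trans S12 X1) (subset_trans S12 X2) cross.
exists (I1 + I2)%type, t, (glue_bag V1 V2); split => //; first by exists (inl x1).
by apply/forallP => -[i|j] /=; [apply: (forallP adm1) | apply: (forallP adm2)].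
Qed.

Section Step.
Variables (Br : {set {set T}}) (X : {set T}).
Hypothesis Br_bramble : is_bramble e Br.
Hypothesis X_hitting : hitting Br X.
Hypothesis X_min : forall Y, hitting Br Y -> #|X| <= #|Y|.
Hypothesis X_small : #|X| <= s.
Hypothesis larger_admissible : forall Br', is_bramble e Br' -> #|Br| < #|Br'| ->
  admissible_decomp Br' setT set0.

Section Component.
Variable c : T.
Hypothesis cX : c \notin X.
Local Notation C := (component e (~: X) c).

Let cX' : c \in ~: X. Proof. by rewrite inE. Qed.

Lemma component_notin v : v \in C -> v \notin X.
Proof. by move/(subsetP (component_sub e cX')); rewrite inE. Qed.

Lemma untouched_component_decomp A : A \in Br -> ~~ touch e A C ->
  admissible_decomp Br (X :|: C) X.
Proof.
move=> ABr nt; pose N := [set x in X | [exists y in C, e x y]].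
have NX : N \subset X by apply/subsetP => x; rewrite inE => /andP[].
have [t1 dec1] := tree_decomp_single e X.
have [t2 dec2] := tree_decomp_single e (C :|: N).
have cross u v : u \in X -> v \in C :|: N -> e u v -> (u \in C :|: N) || (v \in X).
  move=> uX /setUP[vC|/(subsetP NX)->] euv; rewrite ?orbT //.
  rewrite in_setU [u \in N]inE uX /=.
  by apply/orP; left; apply/orP; right; apply/exists_inP; exists v.
have [t dec] := tree_decomp_glue e_sym (x1 := tt) (x2 := tt) dec1 dec2
  (subsetIl _ _) (subsetIr _ _) cross.
have -> : X :|: C = X :|: (C :|: N) by rewrite setUCA (setUidPl NX) setUC.
exists (unit + unit)%type, t, (glue_bag (fun _ => X) (fun _ => C :|: N)).
split=> //; first by exists (inl tt).
apply/forallP => -[[]|[]] /=; first by rewrite ltnNge X_small.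
apply/implyP => _; apply/forall_inPn; exists A => //; rewrite negbK; apply/eqP/setP => v.
rewrite in_set0 in_setI in_setU [v \in N]inE.
apply/negbTE/negP => /andP[/orP[vC|/andP[vX /exists_inP[y yC evy]]] vA].
  by case/negP: nt; apply/orP; left; apply/set0Pn; exists v; rewrite inE vA.
by case/negP: nt; apply/orP; right; apply/exists_inP; exists v => //; apply/exists_inP; exists y.
Qed.

Lemma component_reaches_X A a : A \in Br -> a \in A :\: C ->
  component e (A :\: C) a :&: X != set0.
Proof.
move=> ABr aAC; set K := component e (A :\: C) a.
have KAC := subsetP (component_sub e aAC).
apply: contraT; rewrite negbK => /eqP KX0.
have noX v : v \in K -> v \notin X.
  by move=> vK; apply/negP => vX; move: (in_set0 v); rewrite -KX0 inE vK vX.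
have /set0Pn[x0 /setIP[x0X x0A]] := forall_inP X_hitting A ABr.
have aA : a \in A by move: aAC; rewrite inE => /andP[].
have [Br_conn _] := Br_bramble.
have x0K : x0 \notin K by apply/negP => /noX; rewrite x0X.
have [u [v [euv uA vA uK vK]]] := exists_boundary_edge (P := fun z => z \in K)
  (connected_setW (Br_conn A ABr) aA x0A) (component_self e _ a) x0K.
have uC : u \notin C by have := KAC u uK; rewrite inE => /andP[].
case: (boolP (v \in C)) => vC.
  by case/negP: uC; apply: component_closed cX' vC _ _; rewrite ?inE ?noX // e_sym.
by case/negP: vK; apply: component_closed aAC uK _ euv; rewrite inE vC vA.
Qed.

Section Projection.
Variables (I : finType) (t : rel I) (V : I -> {set T}) (t0 : I) (par : I -> I) (rk : I -> nat).
Hypothesis decV : tree_decomp e setT t V.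
Hypothesis t_rooted : rooted t t0 par rk.
Hypothesis V_adm : admissible (C |: Br) V.
Hypothesis t0_big : s < #|V t0|.
Hypothesis t0_hitting : hitting Br (V t0).

Definition below_X i := [set x in X | [exists j, (x \in V j) && fconnect par j i]].

Definition proj_bag i := (V i :&: C) :|: below_X i.

Lemma root_bag_disjoint : V t0 :&: C = set0.
Proof.
by apply/eqP; have := forallP V_adm t0; rewrite t0_big /= hitting_setU1 t0_hitting andbT negbK.
Qed.

Lemma below_X_sub i : below_X i \subset X.
Proof. by apply/subsetP => x; rewrite inE => /andP[]. Qed.

Lemma mem_below_X x i j : x \in X -> x \in V j -> fconnect par j i -> x \in below_X i.
Proof. by move=> xX xj ji; rewrite inE xX; apply/existsP; exists j; rewrite xj. Qed.

Lemma exchange_hitting i : hitting Br ((X :\: below_X i) :|: (V i :\: C)).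
Proof.
apply/forall_inP => A ABr.
case: (boolP [exists x in X :&: A, x \notin below_X i]) => [|/exists_inPn inb].
  case/exists_inP => x /setIP[xX xA] xb.
  by apply/set0Pn; exists x; rewrite in_setI in_setU in_setD xb xX xA.
have /set0Pn[a /setIP[aV aA]] := forall_inP t0_hitting A ABr.
have aAC : a \in A :\: C.
  rewrite in_setD aA andbT; apply/negP => aC.
  by move: (in_set0 a); rewrite -root_bag_disjoint in_setI aV aC.
set K := component e (A :\: C) a; have KAC := subsetP (component_sub e aAC).
have /set0Pn[x /setIP[xK xX]] := component_reaches_X ABr aAC.
have xXA : x \in X :&: A by have := KAC x xK; rewrite in_setI in_setD xX => /andP[].
move/negPn: (inb x xXA); rewrite inE xX => /existsP[j /andP[xj ji]].
have aK : V t0 :&: K != set0 by apply/set0Pn; exists a; rewrite in_setI aV component_self.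
have K_conn : connected_in e K := component_connected e_sym (A := A :\: C) (a := a).
have /set0Pn[w /setIP[wV wK]] := meeting_ancestor decV t_rooted (subsetT K) K_conn aK xK xj ji.
have := KAC w wK; rewrite in_setD => /andP[wC wA].
by apply/set0Pn; exists w; rewrite in_setI in_setU !in_setD wV wC wA orbT.
Qed.

(* Otherwise [exchange_hitting] would give a cover of [Br] smaller than [X]. *)
Lemma proj_bag_card i : #|proj_bag i| <= #|V i|.
Proof.
have := X_min (exchange_hitting i).
have := cardsU (X :\: below_X i) (V i :\: C).
have := cardsU (V i :&: C) (below_X i).
have := cardsD X (below_X i); rewrite (setIidPr (below_X_sub i)).
have := cardsID C (V i); have := subset_leq_card (below_X_sub i).
rewrite /proj_bag; lia.
Qed.

Lemma X_sub_proj_root : X \subset proj_bag t0.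
Proof.
have [_ _ covV _ _] := decV; apply/subsetP => x xX; have [j xj] := covV x (in_setT x).
by rewrite in_setU (mem_below_X xX xj (ancestor_root t_rooted j)) orbT.
Qed.

Lemma proj_bag_notin_C v i : v \notin C -> (v \in proj_bag i) = (v \in below_X i).
Proof. by move=> vC; rewrite in_setU in_setI (negPf vC) andbF. Qed.

Lemma proj_decomp : tree_decomp e (X :|: C) t proj_bag.
Proof.
have [t_tree _ covV edgeV _] := decV.
have proj_mem v j : v \in X :|: C -> v \in V j -> v \in proj_bag j.
  case/setUP => [vX|vC] vj; first by rewrite in_setU (mem_below_X vX vj (connect0 _ _)) orbT.
  by rewrite in_setU in_setI vj vC.
split=> //.
- move=> i; apply/subsetP => v /setUP[/setIP[_ vC]|/(subsetP (below_X_sub i)) vX].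
    by rewrite in_setU vC orbT.
  by rewrite in_setU vX.
- by move=> v vXC; have [j vj] := covV v (in_setT v); exists j; apply: proj_mem.
- move=> u v uXC vXC euv; have [j /andP[uj vj]] := edgeV u v (in_setT u) (in_setT v) euv.
  by exists j; rewrite !proj_mem.
move=> v i1 i2 vi1 vi2; rewrite bag_connectE.
suff: connected_in t [set i | v \in proj_bag i] by apply; rewrite inE.
case: (boolP (v \in C)) => vC.
  have vX := component_notin vC.
  have -> : [set i | v \in proj_bag i] = [set i | v \in V i].
    by apply/setP => i; move: vC; rewrite !inE => ->; rewrite andbT (negPf vX) orbF.
  by move=> a b; rewrite !inE; exact: (connect_bags decV).
move: vi1; rewrite proj_bag_notin_C // inE => /andP[vX /existsP[j /andP[vj _]]].
apply: (connected_in_par_closed t_rooted (a0 := t0)).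
  by rewrite inE proj_bag_notin_C // (mem_below_X vX vj (ancestor_root t_rooted j)).
move=> a; rewrite !(in_set (fun i => v \in proj_bag i)) !proj_bag_notin_C // => va ->.
move: va.
rewrite !inE vX => /existsP[k /andP[vk ka]]; apply/existsP; exists k.
by rewrite vk (connect_trans ka (fconnect1 par a)).
Qed.

Lemma proj_admissible : admissible Br proj_bag.
Proof.
apply/forallP => i; apply/implyP => big.
have bigV : s < #|V i| := leq_trans big (proj_bag_card i).
have := forallP V_adm i; rewrite bigV /= hitting_setU1 negb_and negbK.
case/orP => [/eqP ViC | /forall_inPn[A ABr]].
  have : proj_bag i \subset X by rewrite /proj_bag ViC set0U below_X_sub.
  by move/subset_leq_card/leq_trans/(_ X_small); rewrite leqNgt big.
rewrite negbK => /eqP ViA.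
apply/forall_inPn; exists A => //; rewrite negbK; apply/eqP/setP => v.
rewrite in_set0 in_setI in_setU; apply/negbTE/negP => /andP[/orP[/setIP[vV _]|vb] vA].
  by move: ViA => /setP/(_ v); rewrite !inE vV vA.
move: vb; rewrite inE => /andP[vX /existsP[j /andP[vj ji]]].
have [Br_conn _] := Br_bramble.
have := meeting_ancestor decV t_rooted (subsetT A) (connected_setW (Br_conn A ABr))
  (forall_inP t0_hitting A ABr) vA vj ji.
by rewrite ViA eqxx.
Qed.

End Projection.

Lemma extended_decomp_projects :
  admissible_decomp (C |: Br) setT set0 ->
  admissible_decomp Br setT set0 \/ admissible_decomp Br (X :|: C) X.
Proof.
case=> I [t [V [decV _ V_adm]]]; have [t_tree _ _ _ _] := decV.
case: (boolP (admissible Br V)) => [adm|/forallPn[t0]].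
  left; exists I, t, V; split=> //.
  by case: t_tree => /card_gt0P[i _] _ _ _ _; exists i; rewrite sub0set.
rewrite negb_imply negbK => /andP[t0_big t0_hitting].
have [par [rk t_rooted]] := tree_rooted_at t0 t_tree.
right; exists I, t, (proj_bag V par); split; first exact: proj_decomp decV t_rooted.
  by exists t0; apply: X_sub_proj_root decV t_rooted.
exact: proj_admissible decV t_rooted V_adm t0_big t0_hitting.
Qed.

Lemma component_decomp :
  admissible_decomp Br setT set0 \/ admissible_decomp Br (X :|: C) X.
Proof.
case: (boolP [exists A in Br, ~~ touch e A C]) => [/exists_inP[A ABr nt]|/exists_inPn touchC].
  by right; apply: untouched_component_decomp ABr nt.
apply: extended_decomp_projects; apply: larger_admissible.
  apply: bramble_setU1 => //; last by move=> A /touchC; rewrite negbK.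
  apply/andP; split; first by apply/set0Pn; exists c; apply: component_self.
  by apply/forall_inP => x xC; apply/forall_inP => y yC; apply: component_connected.
have CBr : C \notin Br.
  apply/negP => /(forall_inP X_hitting)/set0Pn[v /setIP[vX vC]].
  by rewrite (negPf (component_notin vC)) in vX.
by rewrite cardsU1 CBr.
Qed.

End Component.

Local Notation comp := (component e (~: X)).

Lemma admissible_decomp_components (cs : seq T) : {subset cs <= ~: X} ->
  admissible_decomp Br setT set0 \/ admissible_decomp Br (X :|: \bigcup_(d <- cs) comp d) X.
Proof.
elim: cs => [_|c cs IHcs csX].
  by right; rewrite big_nil setU0; apply: admissible_decomp_single.
have cX' : c \in ~: X by apply: csX; rewrite mem_head.
have cX : c \notin X by rewrite inE in cX'.
have csX' : {subset cs <= ~: X} := fun d dcs => csX d (mem_behead (s := c :: cs) dcs).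
have [|dec_cs] := IHcs csX'; first by left.
have [|dec_c] := component_decomp cX; first by left.
right; rewrite big_cons; set U := \bigcup_(d <- cs) _.
have memU v : v \in U -> exists2 d, d \in cs & v \in comp d by rewrite /U bigcup_seq => /bigcupP.
case: (boolP [exists v in comp c, v \in U]) => [|/exists_inPn CU].
  case/exists_inP => v vC /memU[d dcs vd]; suff -> : comp c :|: U = U by [].
  apply/setUidPr/subsetP => w wC; rewrite /U bigcup_seq; apply/bigcupP; exists d => //.
  by rewrite -(component_eq e_sym vd) (component_eq e_sym vC).
rewrite setUUr; apply: admissible_decomp_glue dec_c dec_cs _ _.
  apply/subsetP => v; rewrite in_setI !in_setU => /andP[/orP[->//|vC] /orP[->//|vU]].
  by have := CU v vC; rewrite vU.
move=> u v /setUP[uX|uC] /setUP[vX|vU] euv; rewrite !in_setU ?uX ?vX ?orbT //.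
have vX : v \in ~: X.
  by have [d dcs vd] := memU v vU; apply: (subsetP (component_sub e (csX' d dcs))).
by rewrite (component_closed cX' uC vX euv) !orbT.
Qed.

Lemma admissible_decomp_step : admissible_decomp Br setT set0.
Proof.
have /admissible_decomp_components[//|] : {subset enum (~: X) <= ~: X}.
  by move=> c; rewrite mem_enum.
have -> : X :|: \bigcup_(d <- enum (~: X)) comp d = setT.
  apply/setP => v; rewrite in_setT in_setU; case: (boolP (v \in X)) => //= vX.
  rewrite bigcup_seq; apply/bigcupP; exists v; [by rewrite mem_enum inE | exact: component_self].
by case=> I [t [V [dec [i _] adm]]]; exists I, t, V; split=> //; exists i; rewrite sub0set.
Qed.

End Step.
End Admissible.

Section BrambleDuality.
Variables (T : finType) (e : rel T).
Hypothesis e_sym : symmetric e.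

Lemma bramble_order_le_max_bag S (I : finType) (t : rel I) (V : I -> {set T}) Br :
  tree_decomp e S t V -> is_bramble e Br -> (forall A, A \in Br -> A \subset S) ->
  bramble_order Br <= \max_(i : I) #|V i|.
Proof.
move=> dec [conn touch] BrS.
have [|i hit] := decomp_bag_hitting dec (Br := Br) _ touch.
  move=> A ABr; have connA := conn A ABr; case/andP: (connA) => ne _.
  by split; [exact: BrS | exact: ne | exact: connected_setW].
exact: leq_trans (bramble_order_le hit) (leq_bigmax i).
Qed.

Variable s : nat.
Hypothesis order_bound : forall Br, is_bramble e Br -> bramble_order Br <= s.

Lemma admissible_decomp_exists Br : is_bramble e Br -> admissible_decomp e s Br setT set0.
Proof.
move=> Br_bramble; have [n lt] := ubnP (#|{set T}| - #|Br|).
elim: n Br Br_bramble lt => // n IHn Br Br_bramble lt.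
have [X X_hitting X_card] := min_hitting_set (bramble_hitting_setT Br_bramble).
apply: (admissible_decomp_step e_sym Br_bramble X_hitting).
- by move=> Y /bramble_order_le; rewrite X_card.
- by rewrite X_card order_bound.
- move=> Br' Br'_bramble lt'; apply: IHn => //.
  by move: lt lt' (max_card Br'); set a := #|{set T}|; lia.
Qed.

(* Every vertex set hits the empty bramble. *)
Lemma small_bags_decomp : exists (I : finType) (t : rel I) (V : I -> {set T}),
  tree_decomp e setT t V /\ forall i, #|V i| <= s.
Proof.
have : is_bramble e set0 by split=> A; rewrite in_set0.
case/admissible_decomp_exists => I [t [V [dec _ adm]]]; exists I, t, V; split=> // i.
rewrite leqNgt; apply/negP => big; move: (forallP adm i); rewrite big /=.
by case/forall_inPn => A; rewrite in_set0.
Qed.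

End BrambleDuality.

Theorem lemma2p2 (T : finType) (e : rel T) (esym : symmetric e) (eirr : irreflexive e)
    (Br : {set {set T}}) (X : {set T}) (k : nat) (twG twGX : int) :
  max_order_bramble e Br ->
  bramble_order (bramble_restr Br X) <= k ->
  has_treewidth e [set: T] twG ->
  has_treewidth e (~: X) twGX ->
  (twG <= twGX + k%:Z)%R.
Proof.
case=> Br_bramble Br_max le_k [_ twG_min] [[I [t [V [decV <-]]]] _].
pose Br0 := [set A in Br | A :&: X == set0].
have Br0_sub : Br0 \subset Br by apply/subsetP => A; rewrite inE => /andP[].
have BrX_sub : bramble_restr Br X \subset Br by apply/subsetP => A; rewrite inE => /andP[].
have Br0_le : bramble_order Br0 <= \max_(i : I) #|V i|.
  apply: bramble_order_le_max_bag decV (bramble_sub Br0_sub Br_bramble) _ => A.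
  rewrite inE => /andP[_]; rewrite setI_eq0 => AX.
  by apply/subsetP => v vA; rewrite inE (disjointFr AX vA).
have Br_le : bramble_order Br <= bramble_order Br0 + bramble_order (bramble_restr Br X).
  have {1}-> : Br = Br0 :|: bramble_restr Br X.
    by apply/setP => A; rewrite !inE; case: (A \in Br); case: (A :&: X == set0).
  by apply: bramble_orderU; apply: bramble_hitting_setT; apply: bramble_sub Br_bramble.
have [I' [t' [V' [decV' small]]]] := small_bags_decomp esym Br_max.
have := twG_min _ _ _ decV'.
have : (\max_(i : I') #|V' i|)%N <= bramble_order Br by apply/bigmax_leqP => i _.
rewrite /td_width; lia.
Qed.
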